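(* Let $X$ be a $T_1$-space. Then $\overline{\mathrm{F}}(X)\simeq\overline{\mathrm{F}}(\mathcal{O}X)$ and $\mathrm{F}(X)\simeq\mathrm{F}(\mathcal{O}X)$ as posets.
   Context: $\overline{\mathrm{F}}(X)$ is the set of all functions $X\to[-\infty,+\infty]$ and $\mathrm{F}(X)$ the set of all functions $X\to\mathbb{R}$, both ordered pointwise. $\mathcal{O}X$ is the frame of open sets of $X$. For a frame $L$: $\mathbb{Q}$ is the rationals; a sublocale of $L$ is a subset closed under arbitrary meets and such that $x\to s\in S$ for $x\in L$, $s\in S$; $\mathrm{coS}(L)$ is the frame of sublocales ordered by reverse inclusion, with pseudocomplement $^\ast$. The frame $\mathfrak{L}(\overline{\mathbb{IR}})$ is presented by generators $(r,\textsf{---})$, $(\textsf{---},s)$ ($r,s\in\mathbb{Q}$) with relations (r1) $(r,\textsf{---})\wedge(\textsf{---},s)=0$ for $r\ge s$; (r3) $(r,\textsf{---})=\bigvee_{s>r}(s,\textsf{---})$; (r4) $(\textsf{---},s)=\bigvee_{r<s}(\textsf{---},r)$. $\overline{\mathrm{F}}(L)$ is the set of frame homomorphisms $f\colon\mathfrak{L}(\overline{\mathbb{IR}})\to\mathrm{coS}(L)$ with $f(r,\textsf{---})^\ast\le f(\textsf{---},s)$ and $f(\textsf{---},s)^\ast\le f(r,\textsf{---})$ for $r<s$, ordered by $f\le g$ iff $f(r,\textsf{---})\le g(r,\textsf{---})$ and $g(\textsf{---},s)\le f(\textsf{---},s)$; it is a complete lattice with top $\boldsymbol{+\infty}$ ($(r,\textsf{---})\mapsto1$,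 $(\textsf{---},s)\mapsto0$) and bottom $\boldsymbol{-\infty}$ ($(r,\textsf{---})\mapsto0$, $(\textsf{---},s)\mapsto1$). $\mathrm{F}(L)$ is the set of $f\in\overline{\mathrm{F}}(L)$ such that for all $g\in\overline{\mathrm{F}}(L)$, $f\vee g=\boldsymbol{+\infty}\Rightarrow g=\boldsymbol{+\infty}$ and $f\wedge g=\boldsymbol{-\infty}\Rightarrow g=\boldsymbol{-\infty}$. *)

From HB Require Import structures.
From mathcomp Require Import all_boot all_order all_algebra.
From mathcomp Require Import all_classical all_reals all_analysis.
Set Implicit Arguments. Unset Strict Implicit. Unset Printing Implicit Defensive.
Import Order.TTheory GRing.Theory Num.Theory.
Local Open Scope classical_set_scope.
Local Open Scope ring_scope.

Section FrameOX.
Variable X : topologicalType.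

Definition Opens : set (set X) := [set U | open U].

Definition Omeet (A : set (set X)) : set X :=
  \bigcup_(W in [set W : set X | open W /\ forall U, A U -> W `<=` U]) W.

Definition Oimp (U V : set X) : set X :=
  \bigcup_(W in [set W : set X | open W /\ W `&` U `<=` V]) W.

Definition sublocale (S : set (set X)) : Prop :=
  [/\ S `<=` Opens,
      (forall A : set (set X), A `<=` S -> S (Omeet A)) &
      (forall x s, open x -> S s -> S (Oimp x s))].

Definition coS_le (S T : set (set X)) : Prop := T `<=` S.
Definition coS_bot : set (set X) := Opens.
Definition coS_top : set (set X) := [set setT].
Definition coS_meet (S T : set (set X)) : set (set X) :=
  \bigcap_(U in [set U | sublocale U /\ S `|` T `<=` U]) U.
Definition coS_join (I : Type) (P : set I) (F : I -> set (set X)) : set (set X) :=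
  Opens `&` \bigcap_(i in P) F i.
Definition coS_pc (S : set (set X)) : set (set X) :=
  coS_join [set T | sublocale T /\ coS_meet S T = coS_bot] id.

(* ---- Fbar(OX) ----
   A frame homomorphism f : L(IRbar) -> coS(OX) is (by the universal property of
   the presentation) the same as an assignment of the generators satisfying the
   relations (r1), (r3), (r4).  We represent f by the pair
   (fun r => f(r,---), fun s => f(---,s)). *)
Definition FbarL := ((rat -> set (set X)) * (rat -> set (set X)))%type.

Definition is_FbarL (f : FbarL) : Prop :=
  [/\ (forall r, sublocale (f.1 r)) /\ (forall s, sublocale (f.2 s)),
      (forall r s, s <= r -> coS_meet (f.1 r) (f.2 s) = coS_bot),
      (forall r, f.1 r = coS_join [set s | r < s] f.1),
      (forall s, f.2 s = coS_join [set r | r < s] f.2) &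
      (forall r s, r < s ->
         coS_le (coS_pc (f.1 r)) (f.2 s) /\ coS_le (coS_pc (f.2 s)) (f.1 r))].

Definition FbarL_le (f g : FbarL) : Prop :=
  (forall r, coS_le (f.1 r) (g.1 r)) /\ (forall s, coS_le (g.2 s) (f.2 s)).

Definition FbarL_pinfty : FbarL := (fun _ => coS_top, fun _ => coS_bot).
Definition FbarL_minfty : FbarL := (fun _ => coS_bot, fun _ => coS_top).

Definition FbarL_is_join (f g h : FbarL) : Prop :=
  [/\ is_FbarL h, FbarL_le f h, FbarL_le g h &
      forall k, is_FbarL k -> FbarL_le f k -> FbarL_le g k -> FbarL_le h k].
Definition FbarL_is_meet (f g h : FbarL) : Prop :=
  [/\ is_FbarL h, FbarL_le h f, FbarL_le h g &
      forall k, is_FbarL k -> FbarL_le k f -> FbarL_le k g -> FbarL_le k h].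

Definition is_FL (f : FbarL) : Prop :=
  is_FbarL f /\
  forall g, is_FbarL g ->
    (FbarL_is_join f g FbarL_pinfty -> g = FbarL_pinfty) /\
    (FbarL_is_meet f g FbarL_minfty -> g = FbarL_minfty).

End FrameOX.

Definition poset_iso (A B : Type) (PA : A -> Prop) (leA : A -> A -> Prop)
    (PB : B -> Prop) (leB : B -> B -> Prop) : Prop :=
  exists phi : A -> B,
    [/\ (forall a, PA a -> PB (phi a)),
        (forall b, PB b -> exists2 a, PA a & phi a = b) &
        (forall a a', PA a -> PA a' -> (leA a a' <-> leB (phi a) (phi a')))].

Definition Fbar_le (R : realType) (X : Type) (f g : X -> \bar R) : Prop :=
  forall x, (f x <= g x)%E.
Definition F_le (R : realType) (X : Type) (f g : X -> R) : Prop :=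
  forall x, f x <= g x.

From mathcomp Require Import all_boot all_order all_algebra.
From mathcomp Require Import all_classical all_reals all_analysis.
From mathcomp Require Import lra.
Set Implicit Arguments. Unset Strict Implicit. Unset Printing Implicit Defensive.
Import Order.TTheory GRing.Theory Num.Theory.
Local Open Scope classical_set_scope.
Local Open Scope ring_scope.

(* In a T1 space each complement X \ {x} of a point is open, and it is a prime
   element of OX.  Recording which of them a sublocale S contains gives its set
   of points pts S; every subset A of X induces a sublocale Sp A with
   pts (Sp A) = A, and Sp A is contained in every sublocale whose points include A.
   As the complements of points are prime, S /\ T = 0 in coS(OX) iff
   pts S and pts T cover X, hence S^* = Sp (X \ pts S).
   A function f : X -> [-oo, +oo] thus gives the element
     (r, ---) |-> \/_{s > r} Sp {f <= s},   (---, s) |-> \/_{r < s} Sp {r <= f}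
   of Fbar(OX), whose points are {f <= r} and {s <= f}; this makes the map an
   order embedding.  Conversely, (r1) and the two pseudocomplement conditions
   express each generator of h in Fbar(OX) through the pseudocomplements of
   the others, so h is determined by its points and is the image of
   x |-> inf {r | x in pts h(r, ---)}.  Joins and meets are then computed
   pointwise, and the condition defining F(OX) picks out the real-valued
   functions. *)

Section Frame.
Variable X : topologicalType.
Implicit Types (U V W A B : set X) (F S T : set (set X)).

Lemma open_Omeet F : open (Omeet F).
Proof. by apply: bigcup_open => W []. Qed.

Lemma Omeet_sub F U : F U -> Omeet F `<=` U.
Proof. by move=> FU x [W [_ WU] Wx]; exact: WU. Qed.

Lemma sub_Omeet F V : open V -> (forall U, F U -> V `<=` U) -> V `<=` Omeet F.
Proof. by move=> oV VU x Vx; exists V. Qed.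

Lemma open_Oimp U V : open (Oimp U V).
Proof. by apply: bigcup_open => W []. Qed.

Lemma Oimp_mp U V : Oimp U V `&` U `<=` V.
Proof. by move=> x [[W [_ WUV] Wx] Ux]; exact: WUV. Qed.

Lemma sub_Oimp U V W : open W -> W `&` U `<=` V -> W `<=` Oimp U V.
Proof. by move=> oW WUV x Wx; exists W. Qed.

Lemma OimpI U V W : Oimp U (V `&` W) = Oimp U V `&` Oimp U W.
Proof.
apply/seteqP; split=> [x Ux | ].
  by split; apply: sub_Oimp (open_Oimp U (V `&` W)) _ _ Ux => y /Oimp_mp [].
apply: sub_Oimp; first by apply: openI; exact: open_Oimp.
by move=> x [[xV xW] Ux]; split; apply: (@Oimp_mp U); split.
Qed.

Lemma sublocale_Opens : sublocale (@Opens X).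
Proof.
split=> //; first by move=> F _; exact: open_Omeet.
by move=> U V _ _; exact: open_Oimp.
Qed.

Lemma sublocale_setT S : sublocale S -> S setT.
Proof.
case=> _ Smeet _; have -> : [set: X] = Omeet set0.
  by apply/seteqP; split=> //; apply: sub_Omeet => //; exact: openT.
exact: Smeet.
Qed.

Lemma sublocale_image2I S T :
  sublocale S -> sublocale T -> sublocale [set s `&` t | s in S & t in T].
Proof.
move=> [SO Smeet Simp] [TO Tmeet Timp]; split.
- by move=> _ [s Ss [t Tt <-]]; apply: openI; [exact: SO | exact: TO].
- move=> F FST.
  pose Fs := [set s | S s /\ exists2 t, T t & F (s `&` t)].
  pose Ft := [set t | T t /\ exists2 s, S s & F (s `&` t)].
  exists (Omeet Fs); first by apply: Smeet => s [].
  exists (Omeet Ft); first by apply: Tmeet => t [].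
  apply/seteqP; split.
    apply: sub_Omeet; first by apply: openI; exact: open_Omeet.
    move=> _ /[dup] /FST [s Ss [t Tt <-]] Fst x [xs xt].
    split; first by apply: Omeet_sub xs; split=> //; exists t.
    by apply: Omeet_sub xt; split=> //; exists s.
  move=> x Fx; split.
    by apply: sub_Omeet (open_Omeet F) _ x Fx => s [_ [t _ /Omeet_sub Fst]] y /Fst [].
  by apply: sub_Omeet (open_Omeet F) _ x Fx => t [_ [s _ /Omeet_sub Fst]] y /Fst [].
- move=> U _ oU [s Ss [t Tt <-]].
  by exists (Oimp U s); [exact: Simp | exists (Oimp U t); [exact: Timp | rewrite OimpI]].
Qed.

Lemma sublocale_coS_join I (P : set I) (G : I -> set (set X)) :
  (forall i, P i -> sublocale (G i)) -> sublocale (coS_join P G).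
Proof.
move=> sG; split; first by move=> W [].
- move=> F FG; split; first exact: open_Omeet.
  by move=> i Pi; have [_ Gmeet _] := sG i Pi; apply: Gmeet => W /FG[_]; apply.
- move=> U V oU [oV GV]; split; first exact: open_Oimp.
  by move=> i Pi; have [_ _ Gimp] := sG i Pi; apply: Gimp => //; exact: GV.
Qed.

Lemma coS_join_sub I (P : set I) (G H : I -> set (set X)) :
  (forall i, P i -> exists2 j, P j & G j `<=` H i) -> coS_join P G `<=` coS_join P H.
Proof.
by move=> GH W [oW GW]; split=> // i /GH [j Pj GjHi]; apply: GjHi; exact: GW.
Qed.

Lemma coS_join_interpolate I (lt : I -> I -> Prop) (G : I -> set (set X)) i :
  (forall a b c, lt a b -> lt b c -> lt a c) ->
  (forall a c, lt a c -> exists2 b, lt a b & lt b c) ->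
  coS_join [set j | lt i j] (fun j => coS_join [set k | lt j k] G) =
  coS_join [set j | lt i j] G.
Proof.
move=> lt_trans lt_dense; apply/seteqP; split=> W [oW GW]; split=> // j ij.
  by have [k ik kj] := lt_dense _ _ ij; have [_] := GW k ik; apply.
by split=> // k jk; apply: GW; exact: lt_trans jk.
Qed.

Lemma coS_join_sandwich I (P : set I) S (B G : I -> set (set X)) :
  S = coS_join P G -> (forall i, P i -> S `<=` B i) ->
  (forall i, P i -> B i `<=` G i) -> S = coS_join P B.
Proof.
move=> SG SB BG; apply/seteqP; split=> [W SW | W [oW BW]].
  by split=> [|i /SB]; [by move: SW; rewrite SG => -[] | exact].
by rewrite SG; split=> // i Pi; apply: BG => //; exact: BW.
Qed.

Lemma coS_join_cst I (P : set I) S :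
  P !=set0 -> S `<=` @Opens X -> coS_join P (fun=> S) = S.
Proof.
move=> [i Pi] SO; apply/seteqP; split=> [W [_ /(_ i Pi)] // | W SW].
by split=> [|j _ //]; exact: SO.
Qed.

Lemma coS_meetC S T : coS_meet S T = coS_meet T S.
Proof. by rewrite /coS_meet setUC. Qed.

Lemma coS_pc_sub S T : sublocale T -> coS_meet S T = @coS_bot X -> coS_pc S `<=` T.
Proof. by move=> sT ST W [_]; apply. Qed.

(* The sublocale induced by the subspace [A]: the opens that are the largest
   open set with their trace on [A]. *)
Definition Sp A : set (set X) :=
  [set U | open U /\ forall V, open V -> V `&` A `<=` U -> V `<=` U].

Definition pts S : set X := [set x | S (~` [set x])].

Lemma sublocale_Sp A : sublocale (Sp A).
Proof.
split; first by move=> U [].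
- move=> F FA; split; first exact: open_Omeet.
  move=> V oV VAF; apply: sub_Omeet => // U FU.
  have [_ UA] := FA U FU; apply: UA => // x Vx; apply: (Omeet_sub FU); exact: VAF.
- move=> U V oU [oV VA]; split; first exact: open_Oimp.
  move=> W oW WA; apply: sub_Oimp => //; apply: VA; first exact: openI.
  by move=> x [[Wx Ux] Ax]; apply: (@Oimp_mp U); split=> //; exact: WA.
Qed.

Lemma Sp_subset A B : A `<=` B -> Sp A `<=` Sp B.
Proof.
move=> AB U [oU UA]; split=> // V oV VB; apply: UA => // x [Vx Ax].
by apply: VB; split=> //; exact: AB.
Qed.

Lemma SpT : Sp setT = @Opens X.
Proof.
apply/seteqP; split=> [U [] // | U oU].
by split=> // V _ VU x Vx; exact: VU.
Qed.

Lemma Sp0 : Sp set0 = @coS_top X.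
Proof.
apply/seteqP; split=> [U [oU /(_ setT openT)] | _ ->].
  by move=> TU; apply/seteqP; split=> // x _; apply: TU => // ? [].
by split=> [|V _ _ //]; exact: openT.
Qed.

Lemma setC1_prime (x : X) U V : ~` [set x] = U `&` V ->
  U = ~` [set x] \/ V = ~` [set x].
Proof.
move=> xUV; have [UV1 UV2] : ~` [set x] `<=` U /\ ~` [set x] `<=` V.
  by split=> y; rewrite xUV => -[].
have C1E W : ~` [set x] `<=` W -> ~ W x -> W = ~` [set x].
  by move=> xW nWx; apply/seteqP; split=> // y Wy yx; apply: nWx; rewrite -yx.
have [Ux|nUx] := pselect (U x); last by left; exact: C1E.
have [Vx|nVx] := pselect (V x); last by right; exact: C1E.
by have /(_ erefl) : (~` [set x]) x by rewrite xUV.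
Qed.

Lemma coS_meet_setC1 S T x : sublocale S -> sublocale T ->
  coS_meet S T (~` [set x]) -> pts S x \/ pts T x.
Proof.
move=> sS sT /(_ [set s `&` t | s in S & t in T]) [].
  split; first exact: sublocale_image2I.
  move=> W [SW|TW].
    by exists W => //; exists setT; [exact: sublocale_setT | rewrite setIT].
  by exists setT; [exact: sublocale_setT | exists W => //; rewrite setTI].
move=> s Ss [t Tt /esym/setC1_prime [sx | tx]].
  by left; rewrite /pts /= -sx.
by right; rewrite /pts /= -tx.
Qed.

Section T1.
Hypothesis X_T1 : accessible_space X.

Lemma open_setC1 (x : X) : open (~` [set x]).
Proof. by rewrite openC; exact: accessible_closed_set1. Qed.

Lemma pts_coS_join I (P : set I) (G : I -> set (set X)) :
  pts (coS_join P G) = \bigcap_(i in P) pts (G i).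
Proof. by apply/seteqP; split=> x; [case | split=> //; exact: open_setC1]. Qed.

Lemma pts_Sp A : pts (Sp A) = A.
Proof.
apply/seteqP; split=> x.
- move=> [_ SpA]; apply/not_notP => nAx.
  suff /(_ x I) : [set: X] `<=` ~` [set x] by apply.
  by apply: SpA; [exact: openT | move=> y [_ Ay] yx; apply: nAx; rewrite -yx].
- move=> Ax; split; first exact: open_setC1.
  by move=> V oV VA y Vy yx; rewrite yx in Vy; exact: (VA x (conj Vy Ax)).
Qed.

Lemma pts_coS_join_Sp I (P : set I) (A : I -> set X) :
  pts (coS_join P (fun i => Sp (A i))) = \bigcap_(i in P) A i.
Proof. by rewrite pts_coS_join; apply: eq_bigcapr => i _; exact: pts_Sp. Qed.

(* Every open [U] of [Sp A] is the meet of the complements of the points of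
   [A] outside [U]. *)
Lemma Sp_least S A : sublocale S -> A `<=` pts S -> Sp A `<=` S.
Proof.
move=> [_ Smeet _] AS U [oU UA].
pose F := [set ~` [set x] | x in A `\` U].
suff -> : U = Omeet F by apply: Smeet => _ [x [Ax _] <-]; exact: AS.
apply/seteqP; split.
  by apply: sub_Omeet => // _ [x [_ nUx] <-] y Uy yx; apply: nUx; rewrite -yx.
apply: UA; first exact: open_Omeet.
move=> y [Fy Ay]; apply/not_notP => nUy.
by have /Omeet_sub /(_ y Fy) /(_ erefl) : F (~` [set y]) by exists y.
Qed.

Lemma coS_meet_botP S T : sublocale S -> sublocale T ->
  coS_meet S T = @coS_bot X <-> (forall x, pts S x \/ pts T x).
Proof.
move=> sS sT; split=> [ST x | ST].
  by apply: coS_meet_setC1 => //; rewrite ST; exact: open_setC1.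
have [SO _ _] := sS; have [TO _ _] := sT.
apply/seteqP; split=> [W | W oW Q [sQ STQ]].
  by apply; split; [exact: sublocale_Opens | move=> U [/SO | /TO]].
apply: (Sp_least (A := setT) sQ); last by rewrite SpT.
by move=> x _; case: (ST x) => ?; apply: STQ; [left | right].
Qed.

Lemma coS_pcE S : sublocale S -> coS_pc S = Sp (~` pts S).
Proof.
move=> sS; apply/seteqP; split.
- move=> W [oW]; apply; split; first exact: sublocale_Sp.
  apply/coS_meet_botP => //; first exact: sublocale_Sp.
  by move=> x; rewrite pts_Sp; exact: lem.
- move=> W SpW; split; first by have [SO _ _] := sublocale_Sp (~` pts S); exact: SO.
  move=> Q [sQ /coS_meet_botP SQ]; apply: (Sp_least sQ) SpW => x nSx.
  by case: (SQ sS sQ x).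
Qed.

End T1.
End Frame.

Lemma rat_between (r t : rat) : r < t -> exists2 s, r < s & s < t.
Proof. by move=> rt; exists ((r + t) / 2); lra. Qed.

Section ExtendedReal.
Variable R : realType.
Local Open Scope ereal_scope.

Definition eratr (q : rat) : \bar R := (ratr q)%:E.

Lemma lte_eratr r s : (eratr r < eratr s) = (r < s)%R.
Proof. by rewrite lte_fin ltr_rat. Qed.

Lemma lee_eratr r s : (eratr r <= eratr s) = (r <= s)%R.
Proof. by rewrite lee_fin ler_rat. Qed.

Lemma ereal_rat_between (a b : \bar R) : a < b -> exists q, a < eratr q < b.
Proof.
move=> ab; have [x [y [ax xy yb]]] :
    exists x y : R, [/\ a <= x%:E, (x < y)%R & y%:E <= b].
  move: ab; case: a => [x| |]; case: b => [y| |] //=.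
  - by move=> xy; exists x, y.
  - by exists x, (x + 1)%R; split; [exact: lexx | lra | exact: leey].
  - by exists (y - 1)%R, y; split; [exact: leNye | lra | exact: lexx].
  - by exists 0%R, 1%R; split; [exact: leNye | lra | exact: leey].
have [q] := rat_in_itvoo xy; rewrite in_itv /= => /andP[xq qy].
by exists q; rewrite (le_lt_trans ax) ?(lt_le_trans _ yb) ?lte_fin.
Qed.

Lemma le_eratrP a r : a <= eratr r <-> (forall s, (r < s)%R -> a <= eratr s).
Proof.
split=> [ar s rs | ars]; first by rewrite (le_trans ar) // lee_eratr ltW.
rewrite leNgt; apply/negP => /ereal_rat_between [q /andP[rq qa]].
by have := ars q; rewrite -lte_eratr => /(_ rq) /(lt_le_trans qa); rewrite ltxx.
Qed.

Lemma ge_eratrP a s : eratr s <= a <-> (forall r, (r < s)%R -> eratr r <= a).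
Proof.
split=> [sa r rs | rsa]; first by rewrite (le_trans _ sa) // lee_eratr ltW.
rewrite leNgt; apply/negP => /ereal_rat_between [q /andP[aq qs]].
by have := rsa q; rewrite -lte_eratr => /(_ qs) /le_lt_trans /(_ aq); rewrite ltxx.
Qed.

Lemma fin_num_max_pinfty (a b : \bar R) :
  a \is a fin_num -> Order.max a b = +oo -> b = +oo.
Proof.
rewrite fin_numE => /andP[_ /negbTE ay] abE; apply/eqP.
have : +oo <= Order.max a b by rewrite abE.
by rewrite le_max !leye_eq ay.
Qed.

Lemma fin_num_min_minfty (a b : \bar R) :
  a \is a fin_num -> Order.min a b = -oo -> b = -oo.
Proof.
rewrite fin_numE => /andP[/negbTE aNy _] abE; apply/eqP.
have : Order.min a b <= -oo by rewrite abE.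
by rewrite ge_min !leeNy_eq aNy.
Qed.

End ExtendedReal.

Section Correspondence.
Variables (R : realType) (X : topologicalType).
Hypothesis X_T1 : accessible_space X.
Implicit Types (f g k : X -> \bar R).

Definition FbarL_of f : FbarL X :=
  (fun r => coS_join [set s | r < s] (fun s => Sp [set x | (f x <= eratr R s)%E]),
   fun s => coS_join [set r | r < s] (fun r => Sp [set x | (eratr R r <= f x)%E])).

Lemma pts_FbarL_of1 f r : pts ((FbarL_of f).1 r) = [set x | (f x <= eratr R r)%E].
Proof.
by rewrite pts_coS_join_Sp //; apply/seteqP; split=> x /=; rewrite le_eratrP.
Qed.

Lemma pts_FbarL_of2 f s : pts ((FbarL_of f).2 s) = [set x | (eratr R s <= f x)%E].
Proof.
by rewrite pts_coS_join_Sp //; apply/seteqP; split=> x /=; rewrite ge_eratrP.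
Qed.

Lemma is_FbarL_of f : is_FbarL (FbarL_of f).
Proof.
have sl1 r : sublocale ((FbarL_of f).1 r).
  by apply: sublocale_coS_join => s _; exact: sublocale_Sp.
have sl2 s : sublocale ((FbarL_of f).2 s).
  by apply: sublocale_coS_join => r _; exact: sublocale_Sp.
split=> //.
- move=> r s sr; apply/coS_meet_botP => // x.
  rewrite pts_FbarL_of1 pts_FbarL_of2 /=.
  have [fr | rf] := leP (f x) (eratr R r); [by left | right].
  by rewrite (le_trans _ (ltW rf)) // lee_eratr.
- move=> r; rewrite /FbarL_of /=; symmetry.
  apply: (@coS_join_interpolate _ _ (fun a b : rat => a < b) _ r).
    by move=> a b c; exact: lt_trans.
  exact: rat_between.
- move=> s; rewrite /FbarL_of /=; symmetry.
  apply: (@coS_join_interpolate _ _ (fun a b : rat => b < a) _ s).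
    by move=> a b c ba cb; exact: lt_trans cb ba.
  by move=> a c /rat_between [b cb ba]; exists b.
- move=> r s rs; have [t rt ts] := rat_between rs.
  rewrite /coS_le (coS_pcE X_T1 (sl1 r)) (coS_pcE X_T1 (sl2 s)).
  rewrite pts_FbarL_of1 pts_FbarL_of2; split=> W [_ FW].
  + apply: Sp_subset (FW t ts) => x /= tf fr.
    by move: (le_trans tf fr); rewrite lee_eratr leNgt rt.
  + apply: Sp_subset (FW t rt) => x /= ft sf.
    by move: (le_trans sf ft); rewrite lee_eratr leNgt ts.
Qed.

Lemma FbarL_of_le f g : Fbar_le f g <-> FbarL_le (FbarL_of f) (FbarL_of g).
Proof.
split=> [fg | [fg _] x].
  split=> r; apply: coS_join_sub => s rs; exists s => //; apply: Sp_subset => x /=.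
    exact: le_trans.
  by move=> sf; exact: le_trans sf _.
rewrite leNgt; apply/negP => /ereal_rat_between [q /andP[gq qf]].
have gqx : pts ((FbarL_of g).1 q) x by rewrite pts_FbarL_of1 /=; exact: ltW.
have : pts ((FbarL_of f).1 q) x by exact: fg.
by rewrite pts_FbarL_of1 /= => /(lt_le_trans qf); rewrite ltxx.
Qed.

Lemma FbarL_of_inj f g : FbarL_of f = FbarL_of g -> f = g.
Proof.
move=> fg.
have /FbarL_of_le le_fg : FbarL_le (FbarL_of f) (FbarL_of g) by rewrite fg; split=> ? ?.
have /FbarL_of_le le_gf : FbarL_le (FbarL_of g) (FbarL_of f) by rewrite fg; split=> ? ?.
by apply/funext => x; apply/le_anti; rewrite le_fg le_gf.
Qed.

Lemma FbarL_of_pinfty : FbarL_of (cst +oo%E) = FbarL_pinfty X.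
Proof.
rewrite /FbarL_of /FbarL_pinfty; congr pair; apply/funext => r.
  rewrite (_ : (fun s => _) = fun=> Sp set0); last first.
    by apply/funext => s; congr Sp; apply/seteqP; split=> x //=; rewrite leye_eq.
  rewrite Sp0 coS_join_cst //; last by move=> _ ->; exact: openT.
  by exists (r + 1) => /=; lra.
rewrite (_ : (fun s => _) = fun=> Sp setT); last first.
  by apply/funext => s; congr Sp; apply/seteqP; split=> x //= _; exact: leey.
by rewrite SpT coS_join_cst //; exists (r - 1) => /=; lra.
Qed.

Lemma FbarL_of_minfty : FbarL_of (cst -oo%E) = FbarL_minfty X.
Proof.
rewrite /FbarL_of /FbarL_minfty; congr pair; apply/funext => r.
  rewrite (_ : (fun s => _) = fun=> Sp setT); last first.
    by apply/funext => s; congr Sp; apply/seteqP; split=> x //= _; exact: leNye.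
  by rewrite SpT coS_join_cst //; exists (r + 1) => /=; lra.
rewrite (_ : (fun s => _) = fun=> Sp set0); last first.
  by apply/funext => s; congr Sp; apply/seteqP; split=> x //=; rewrite leeNy_eq.
rewrite Sp0 coS_join_cst //; last by move=> _ ->; exact: openT.
by exists (r - 1) => /=; lra.
Qed.

Definition FbarL_inv (h : FbarL X) (x : X) : \bar R :=
  ereal_inf [set eratr R r | r in [set r | pts (h.1 r) x]].

Section Inverse.
Variable h : FbarL X.
Hypothesis hF : is_FbarL h.

Lemma FbarL_spatial :
  (forall r, h.1 r = coS_join [set s | r < s] (fun s => Sp (~` pts (h.2 s)))) /\
  (forall s, h.2 s = coS_join [set r | r < s] (fun r => Sp (~` pts (h.1 r)))).
Proof.
have [[sl1 sl2] r1 r3 r4 pcc] := hF.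
have pc_sub1 s : coS_pc (h.2 s) `<=` h.1 s.
  by apply: coS_pc_sub => //; rewrite coS_meetC; exact: r1.
have pc_sub2 r : coS_pc (h.1 r) `<=` h.2 r by apply: coS_pc_sub => //; exact: r1.
split=> [r | s].
  apply: (coS_join_sandwich (r3 r)) => s rs; rewrite -(coS_pcE X_T1 (sl2 s)).
    by have [] := pcc r s rs.
  exact: pc_sub1.
apply: (coS_join_sandwich (r4 s)) => r rs; rewrite -(coS_pcE X_T1 (sl1 r)).
  by have [] := pcc r s rs.
exact: pc_sub2.
Qed.

Lemma pts_FbarL2 s : pts (h.2 s) = \bigcap_(r in [set r | r < s]) ~` pts (h.1 r).
Proof. by rewrite FbarL_spatial.2 pts_coS_join_Sp. Qed.

Lemma pts_FbarL1_mono r t : r < t -> pts (h.1 r) `<=` pts (h.1 t).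
Proof. by have [_ _ r3 _ _] := hF; move=> rt x; rewrite /pts (r3 r) => -[_]; apply. Qed.

Lemma FbarL_inv_le r x : pts (h.1 r) x -> (FbarL_inv h x <= eratr R r)%E.
Proof. by move=> hrx; apply: ereal_inf_lbound; exists r. Qed.

Lemma FbarL_inv_lt t x : (FbarL_inv h x < eratr R t)%E -> pts (h.1 t) x.
Proof.
move=> /ereal_inf_lt [_ [r hrx <-]]; rewrite lte_eratr => rt.
exact: pts_FbarL1_mono rt _ hrx.
Qed.

Lemma FbarL_invK : FbarL_of (FbarL_inv h) = h.
Proof.
have [spatial1 spatial2] := FbarL_spatial.
rewrite [RHS]surjective_pairing /FbarL_of; congr pair; apply/funext => r.
- rewrite spatial1; apply/seteqP; split; apply: coS_join_sub => s rs.
  + have [j rj js] := rat_between rs; have [k jk ks] := rat_between js.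
    exists j => //; apply: Sp_subset => x /= gj; rewrite pts_FbarL2 => /(_ k ks); apply.
    by apply: FbarL_inv_lt; rewrite (le_lt_trans gj) // lte_eratr.
  + exists s => //; apply: Sp_subset => x /=; rewrite pts_FbarL2 => /existsNP [t].
    move=> /not_implyP [ts /contrapT htx].
    by rewrite (le_trans (FbarL_inv_le htx)) // lee_eratr ltW.
- rewrite spatial2; apply/seteqP; split; apply: coS_join_sub => s sr.
  + have [j sj jr] := rat_between sr.
    exists j => //; apply: Sp_subset => x /= jg hsx.
    by have := le_trans jg (FbarL_inv_le hsx); rewrite lee_eratr leNgt sj.
  + exists s => //; apply: Sp_subset => x /= nhsx.
    by rewrite leNgt; apply/negP => /FbarL_inv_lt.
Qed.

End Inverse.

Lemma FbarL_of_is_join f g k :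
  FbarL_is_join (FbarL_of f) (FbarL_of g) (FbarL_of k) <-> k = (f \max g)%FUN.
Proof.
split=> [[_ /FbarL_of_le fk /FbarL_of_le gk least] | ->].
  have /FbarL_of_le kfg : FbarL_le (FbarL_of k) (FbarL_of (f \max g)).
    apply: least; first exact: is_FbarL_of.
      by apply/FbarL_of_le => x /=; rewrite le_max lexx.
    by apply/FbarL_of_le => x /=; rewrite le_max lexx orbT.
  by apply/funext => x; apply/le_anti; rewrite kfg /= ge_max fk gk.
split; first exact: is_FbarL_of.
- by apply/FbarL_of_le => x /=; rewrite le_max lexx.
- by apply/FbarL_of_le => x /=; rewrite le_max lexx orbT.
move=> h hF; rewrite -(FbarL_invK hF) => /FbarL_of_le fh /FbarL_of_le gh.
by apply/FbarL_of_le => x /=; rewrite ge_max fh gh.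
Qed.

Lemma FbarL_of_is_meet f g k :
  FbarL_is_meet (FbarL_of f) (FbarL_of g) (FbarL_of k) <-> k = (f \min g)%FUN.
Proof.
split=> [[_ /FbarL_of_le kf /FbarL_of_le kg greatest] | ->].
  have /FbarL_of_le fgk : FbarL_le (FbarL_of (f \min g)) (FbarL_of k).
    apply: greatest; first exact: is_FbarL_of.
      by apply/FbarL_of_le => x /=; rewrite ge_min lexx.
    by apply/FbarL_of_le => x /=; rewrite ge_min lexx orbT.
  by apply/funext => x; apply/le_anti; rewrite fgk /= le_min kf kg.
split; first exact: is_FbarL_of.
- by apply/FbarL_of_le => x /=; rewrite ge_min lexx.
- by apply/FbarL_of_le => x /=; rewrite ge_min lexx orbT.
move=> h hF; rewrite -(FbarL_invK hF) => /FbarL_of_le hf /FbarL_of_le hg.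
by apply/FbarL_of_le => x /=; rewrite le_min hf hg.
Qed.

Lemma is_FL_of f : is_FL (FbarL_of f) <-> forall x, f x \is a fin_num.
Proof.
split=> [[_ FL] x | fin_f].
  rewrite fin_numE; apply/andP; split; apply/eqP => fx.
    pose g y : \bar R := if y == x then +oo%E else -oo%E.
    have /(FL _ (is_FbarL_of g)).2 :
        FbarL_is_meet (FbarL_of f) (FbarL_of g) (FbarL_minfty X).
      rewrite -FbarL_of_minfty FbarL_of_is_meet; apply/funext => y /=.
      by rewrite /g; case: eqP => [->|_]; rewrite ?fx ?minNye ?mineNy.
    by rewrite -FbarL_of_minfty => /FbarL_of_inj /(congr1 (@^~ x)); rewrite /g eqxx.
  pose g y : \bar R := if y == x then -oo%E else +oo%E.
  have /(FL _ (is_FbarL_of g)).1 :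
      FbarL_is_join (FbarL_of f) (FbarL_of g) (FbarL_pinfty X).
    rewrite -FbarL_of_pinfty FbarL_of_is_join; apply/funext => y /=.
    by rewrite /g; case: eqP => [->|_]; rewrite ?fx ?maxye ?maxey.
  by rewrite -FbarL_of_pinfty => /FbarL_of_inj /(congr1 (@^~ x)); rewrite /g eqxx.
split=> [|h hF]; first exact: is_FbarL_of.
rewrite -(FbarL_invK hF) -FbarL_of_pinfty -FbarL_of_minfty.
rewrite FbarL_of_is_join FbarL_of_is_meet; split=> fgE; congr FbarL_of; apply/funext => x.
  by apply: (fin_num_max_pinfty (fin_f x)); rewrite -[RHS]/(cst _ x) fgE.
by apply: (fin_num_min_minfty (fin_f x)); rewrite -[RHS]/(cst _ x) fgE.
Qed.

End Correspondence.

Theorem mainTheorem14 (R : realType) (X : topologicalType) :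
  accessible_space X ->
  poset_iso (fun _ : X -> \bar R => True) (@Fbar_le R X)
            (@is_FbarL X) (@FbarL_le X) /\
  poset_iso (fun _ : X -> R => True) (@F_le R X)
            (@is_FL X) (@FbarL_le X).
Proof.
move=> X_T1; split.
  exists (@FbarL_of R X); split=> [f _ | h hF | f g _ _].
  - exact: is_FbarL_of.
  - by exists (FbarL_inv R h) => //; exact: FbarL_invK.
  - exact: FbarL_of_le.
exists (fun f => FbarL_of (fun x => (f x)%:E)); split=> [f _ | h hFL | f g _ _].
- by apply/(is_FL_of X_T1).
- have hF : is_FbarL h by case: hFL.
  have fin_h x : FbarL_inv R h x \is a fin_num.
    by move: x; apply/(is_FL_of X_T1); rewrite FbarL_invK.
  exists (fun x => fine (FbarL_inv R h x)) => //.
  rewrite -[RHS](FbarL_invK R X_T1 hF); congr FbarL_of.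
  by apply/funext => x; rewrite fineK.
- by rewrite -(FbarL_of_le X_T1); split=> fg x; have := fg x; rewrite lee_fin.
Qed.
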